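(* Let $k\geq 2$, $n=rk$ with $r>2$, $e=\lceil r/2\rceil-1$. Let $\mathcal{C}_1=\bigcup_{i=1}^{e(q-1)(q^k-1)}\{\alpha U_i\mid\alpha\in\mathbb{F}_{q^n}^*\}$, $\mathcal{C}_2=\bigcup_{j=1}^{e(q-1)}\{\alpha V_j\mid\alpha\in\mathbb{F}_{q^n}^*\}$, and $\mathcal{C}_3=\{\alpha\mathbb{F}_{q^k}\mid\alpha\in\mathbb{F}_{q^n}^*\}$. Then $\mathcal{C}=\mathcal{C}_1\cup\mathcal{C}_2\cup\mathcal{C}_3$ is a cyclic constant dimension subspace code with cardinality $eq^k(q^n-1)+\frac{q^n-1}{q^k-1}$ and minimum distance $2k-2$.
   Context: $q$ is a prime power, $\mathbb{F}_{q^n}$ the degree-$n$ extension of $\mathbb{F}_q$; subspace distance $d(U,V)=\dim U+\dim V-2\dim(U\cap V)$; a code is cyclic if it is a union of orbits $\{\alpha U\mid\alpha\in\mathbb{F}_{q^n}^*\}$. Let $\xi$ be a primitive element of $\mathbb{F}_{q^k}$ and $G=\mathbb{F}_{q^k}^*/\langle\xi^{q-1}\rangle$ (cyclic of order $q-1$, elements used via fixed coset representatives). Let $\gamma$ be a root of an irreducible polynomial of degree $r$ over $\mathbb{F}_{q^k}$. The $U_i=\{u+(\tau_iu^q+u)\delta_i\gamma^{l_i}\mid u\in\mathbb{F}_{q^k}\}$ range over all $e(q-1)(q^k-1)$ triples $(\tau_i,\delta_i,l_i)$ with $\tau_i\in G$, $\delta_i\in\mathbb{F}_{q^k}^*$,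 $1\le l_i\le e$; the $V_j=\{u+\eta_ju^q\gamma^{l_j}\mid u\in\mathbb{F}_{q^k}\}$ range over all $e(q-1)$ pairs $(\eta_j,l_j)$ with $\eta_j\in G$, $1\le l_j\le e$. (Separately, $\mathcal{C}_1$ has size $e(q^k-1)(q^n-1)$ and $\mathcal{C}_2$ has size $e(q^n-1)$, each with minimum distance $2k-2$.) *)

From HB Require Import structures.
From mathcomp Require Import all_boot all_order all_algebra all_field.
Set Implicit Arguments. Unset Strict Implicit. Unset Printing Implicit Defensive.
Import GRing.Theory.
Local Open Scope ring_scope.

Section SubspaceCodes.
Variables (F : finFieldType) (L : fieldExtType F).

Definition elems : seq L := enum (finvect_type L).

Definition nzelems (K : {vspace L}) : seq L :=
  [seq x <- elems | (x \in K) && (x != 0)].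

Definition kelems (K : {vspace L}) : seq L := [seq x <- elems | x \in K].

Definition mulsp (a : L) (V : {vspace L}) : {vspace L} := (<[a]> * V)%VS.

(* the orbit {alpha V | alpha in L^*} listed with repetitions *)
Definition orbit_sp (V : {vspace L}) : seq {vspace L} :=
  [seq mulsp a V | a <- elems & a != 0].

Definition sdist (U V : {vspace L}) : nat :=
  (\dim U + \dim V - 2 * \dim (U :&: V))%N.

(* a code (list of subspaces, viewed as a set) is cyclic: it is a union of
   orbits, i.e. closed under multiplication by nonzero scalars *)
Definition cyclic_code (C : seq {vspace L}) : Prop :=
  forall V a, V \in C -> a != 0 -> mulsp a V \in C.

Definition const_dim_code (C : seq {vspace L}) (k : nat) : Prop :=
  forall V, V \in C -> \dim V = k.

Definition min_dist (C : seq {vspace L}) (d : nat) : Prop :=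
  (forall U V, U \in C -> V \in C -> U != V -> (d <= sdist U V)%N) /\
  exists U V, [/\ U \in C, V \in C, U != V & sdist U V = d].

(* the set {f u | u in K}, as an F-subspace (its span; it is itself a
   subspace since f is F_q-linear) *)
Definition image_sp (K : {vspace L}) (f : L -> L) : {vspace L} :=
  (<<[seq f u | u <- kelems K]>>)%VS.

Definition Usp (K : {vspace L}) (gamma tau delta : L) (l : nat) :=
  image_sp K (fun u => u + (tau * u ^+ #|F| + u) * delta * gamma ^+ l).

Definition Vsp (K : {vspace L}) (gamma eta : L) (l : nat) :=
  image_sp K (fun u => u + eta * u ^+ #|F| * gamma ^+ l).

(* C1, C2, C3 listed as unions of orbits; rep gives the fixed coset
   representatives of G, e is the range bound of l *)
Definition code1 (K : {vspace L}) (gamma : L) (rep : 'I_(#|F|.-1) -> L)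
  (e : nat) : seq {vspace L} :=
  flatten [seq orbit_sp (Usp K gamma (rep td.1) td.2 l)
          | td <- [seq (t, d) | t <- enum 'I_(#|F|.-1), d <- nzelems K],
            l <- iota 1 e].

Definition code2 (K : {vspace L}) (gamma : L) (rep : 'I_(#|F|.-1) -> L)
  (e : nat) : seq {vspace L} :=
  flatten [seq orbit_sp (Vsp K gamma (rep t) l)
          | t <- enum 'I_(#|F|.-1), l <- iota 1 e].

Definition code3 (K : {vspace L}) : seq {vspace L} := orbit_sp K.

End SubspaceCodes.

From HB Require Import structures.
From mathcomp Require Import all_boot all_order all_algebra all_field.
From mathcomp Require Import zify ring.
Import GRing.Theory.
Local Open Scope ring_scope.

(* Every codeword is a translate beta * G(a,s,t) of a graph subspace
   G(a,s,t) = {u + (s u^q + t u) gamma^a | u in F_{q^k}}: U_i has parameters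
   (l, tau delta, delta), V_j has (l, eta, 0) and F_{q^k} itself has (1, 0, 0).
   The levels satisfy a + b <= 2e < r, so 1, gamma^a, gamma^b, gamma^(a+b) are
   F_{q^k}-independent.  If two translates share F_q-independent vectors z1, z2,
   comparing coefficients in z1 z2' = z2 z1' forces equal parameters and
   beta' = beta w with w in F_{q^k}^* and s' w = s w^q.  For U and V this puts
   w^(q-1) in the coset of the representative, so w lies in F_q and the translates
   coincide; for F_{q^k} every such w stabilizes it.  Hence distinct codewords meet
   in dimension at most 1, giving the distance 2k - 2 (attained by explicit pairs),
   and orbit-stabilizer gives orbits of sizes (q^n - 1)/(q - 1) and
   (q^n - 1)/(q^k - 1), which add up to the cardinality. *)

Set Implicit Arguments. Unset Strict Implicit. Unset Printing Implicit Defensive.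

Section Frobenius.
Variables (F : finFieldType) (L : fieldExtType F).
Local Notation q := #|F|.

Lemma card_gt0 : (0 < q)%N.
Proof. exact: ltnW (finNzRing_gt1 F). Qed.

Lemma card_pchar_nat : [pchar L].-nat q.
Proof.
have [p p_pr pF] := finPcharP F.
rewrite (card_pprimeChar pF) pnatX pnatE //=.
by rewrite (pchar_lalg L) pF.
Qed.

Lemma exprD_card (x y : L) : (x + y) ^+ q = x ^+ q + y ^+ q.
Proof. exact: exprDn_pchar card_pchar_nat. Qed.

Lemma exprZ_card (c : F) (x : L) : (c *: x) ^+ q = c *: x ^+ q.
Proof. by rewrite exprZn expf_card. Qed.

Lemma mem1v_card (x : L) : (x \in 1%VS) = (x ^+ q == x).
Proof. by rewrite (Fermat's_little_theorem 1%AS x) dimv1 expn1. Qed.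

End Frobenius.

Section Translates.
Variables (F : finFieldType) (L : fieldExtType F).
Local Notation q := #|F|.

Lemma mem_elems (x : L) : x \in elems L.
Proof. exact: (@mem_enum (finvect_type L) (finvect_type L) x). Qed.

Lemma count_elems (P : pred L) :
  count P (elems L) = #|[pred x : finvect_type L | P x]|.
Proof. by rewrite cardE /elems enumT /enum_mem size_filter. Qed.

Lemma card_vspace_nz (V : {vspace L}) :
  #|[pred x : finvect_type L | (x \in V) && (x != 0)]| = (q ^ \dim V).-1.
Proof.
have := card_vspace (V : {vspace finvect_type L}).
rewrite (cardD1 0) rpred0 /= => <-.
by apply: eq_card => x; rewrite !inE andbC.
Qed.

Lemma mulspP (a : L) (V : {vspace L}) x :
  reflect (exists2 u, u \in V & x = u * a) (x \in mulsp a V).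
Proof. by rewrite /mulsp prodvC; apply: memv_cosetP. Qed.

Lemma dim_mulsp (a : L) V : a != 0 -> \dim (mulsp a V) = \dim V.
Proof. by move=> a0; rewrite /mulsp prodvC dim_cosetv. Qed.

Lemma mulspM (a b : L) V : mulsp a (mulsp b V) = mulsp (a * b) V.
Proof. by rewrite /mulsp prodvA prodv_line. Qed.

Lemma mulsp1 V : mulsp (1 : L) V = V.
Proof. by rewrite /mulsp prod1v. Qed.

Lemma mulsp_id (V : {vspace L}) (w : L) :
  w != 0 -> (forall u, u \in V -> u * w \in V) -> mulsp w V = V.
Proof.
move=> wn wV; apply/eqP; rewrite eqEdim dim_mulsp // leqnn andbT.
by apply/subvP => x /mulspP [u uV ->]; apply: wV.
Qed.

Lemma mulsp_scalar (V : {vspace L}) (w : L) : w \in 1%VS -> w != 0 -> mulsp w V = V.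
Proof.
move=> /vlineP [c ->] wn; apply: mulsp_id => // u uV.
by rewrite mulr_algr memvZ.
Qed.

Lemma mulsp_subfield (K : {subfield L}) (w : L) : w \in K -> w != 0 -> mulsp w K = K.
Proof. by move=> wK wn; apply: mulsp_id => // u uK; rewrite rpredM. Qed.

Lemma dimv_ge2_noncollinear (X : {vspace L}) : (2 <= \dim X)%N ->
  exists z1 z2, [/\ z1 \in X, z2 \in X, z2 != 0 & z1 \notin <[z2]>%VS].
Proof.
move=> dX; have Xn : X != 0%VS by rewrite -dimv_eq0 -lt0n (leq_trans _ dX).
have z2n : vpick X != 0 by rewrite vpick0.
have /subvPn [z1 z1X z1n] : ~~ (X <= <[vpick X]>)%VS.
  by apply/negP => /dimvS; rewrite dim_vline z2n => /(leq_trans dX).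
by exists z1, (vpick X); split=> //; apply: memv_pick.
Qed.

End Translates.

Section Independence.
Variables (F : finFieldType) (L : fieldExtType F) (K : {subfield L}) (r : nat) (gamma : L).
Hypothesis minPoly_size : size (minPoly K gamma) = r.+1.

Lemma polyOver_root_eq0 (P : {poly L}) :
  P \is a polyOver K -> (size P <= r)%N -> P.[gamma] = 0 -> P = 0.
Proof.
move=> PK sP Pg0; apply/eqP; apply: contraTT sP => Pn0.
rewrite -ltnNge -ltnS -minPoly_size.
by apply: dvdp_leq => //; apply: minPoly_dvdp => //; apply/rootP.
Qed.

Lemma gamma_comb_eq0 (A B C D : L) (a b : nat) :
  A \in K -> B \in K -> C \in K -> D \in K ->
  (1 <= a)%N -> (1 <= b)%N -> (a + b < r)%N ->
  A + B * gamma ^+ a + C * gamma ^+ b + D * gamma ^+ (a + b) = 0 ->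
  [/\ A = 0, D = 0 & if a == b then B + C = 0 else B = 0 /\ C = 0].
Proof.
move=> AK BK CK DK a1 b1 abr E.
pose P : {poly L} := A%:P + B *: 'X^a + C *: 'X^b + D *: 'X^(a + b).
have P0 : P = 0.
  apply: polyOver_root_eq0; last by rewrite !hornerE.
    by rewrite !rpredD ?polyOverC ?polyOverZ ?polyOverXn.
  apply: leq_trans (_ : (a + b).+1 <= r)%N => //; apply/leq_sizeP => j hj.
  by rewrite !coefD !coefZ !coefXn coefC !gtn_eqF ?mulr0 ?addr0 //; lia.
have coefP i : P`_i = 0 by rewrite P0 coef0.
have ab_gt0 : (0 < a + b)%N by rewrite addn_gt0 a1.
have a_lt_ab : (a < a + b)%N by rewrite -addn1 leq_add2l.
have b_lt_ab : (b < a + b)%N by rewrite -add1n leq_add2r.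
move: (coefP 0%N) (coefP (a + b)%N) (coefP a) (coefP b).
rewrite !coefD !coefZ !coefXn !coefC !eqxx (ltn_eqF a1) (ltn_eqF b1) (ltn_eqF ab_gt0).
rewrite (gtn_eqF a1) (gtn_eqF b1) (gtn_eqF ab_gt0) (ltn_eqF a_lt_ab) (ltn_eqF b_lt_ab).
rewrite (gtn_eqF a_lt_ab) (gtn_eqF b_lt_ab).
rewrite /= !mulr0 !mulr1 !addr0 !add0r => -> -> Ba Bb; split=> //.
case: eqP Ba Bb => [<- | /eqP ab]; first by rewrite eqxx mulr1.
by rewrite eq_sym (negbTE ab) !mulr0 addr0 add0r => -> ->.
Qed.

End Independence.

Section GraphMap.
Variables (F : finFieldType) (L : fieldExtType F).
Local Notation q := #|F|.

Definition graph_map (gamma : L) (a : nat) (s t u : L) : L :=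
  u + (s * u ^+ q + t * u) * gamma ^+ a.

Lemma graph_map_is_linear gamma a s t : linear (graph_map gamma a s t).
Proof.
move=> c u v; rewrite /graph_map exprD_card exprZ_card.
have algE (x : L) : c *: x = c%:A * x by rewrite mulr_algl.
rewrite [c *: u]algE [c *: u ^+ _]algE [c *: (u + _)]algE; ring.
Qed.

HB.instance Definition _ gamma a s t :=
  GRing.isLinear.Build F L L *:%R (graph_map gamma a s t) (graph_map_is_linear gamma a s t).

Lemma graph_map0 gamma a s t : graph_map gamma a s t 0 = 0.
Proof. exact: raddf0. Qed.

Lemma image_sp_ext (K : {vspace L}) (f g : L -> L) : f =1 g -> image_sp K f = image_sp K g.
Proof. by move=> fg; rewrite /image_sp (eq_map fg). Qed.

Lemma image_spE (K : {vspace L}) (f : {linear L -> L}) :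
  image_sp K f = (linfun f @: K)%VS.
Proof.
apply/eqP; rewrite eqEsubv; apply/andP; split.
  apply/span_subvP => y /mapP [u]; rewrite mem_filter => /andP [uK _] ->.
  by rewrite -lfunE memv_img.
apply/subvP => y /memv_imgP [u uK ->]; rewrite lfunE.
by apply: memv_span; apply: map_f; rewrite mem_filter uK mem_elems.
Qed.

Lemma image_sp_linearP (K : {vspace L}) (f : {linear L -> L}) x :
  reflect (exists2 u, u \in K & x = f u) (x \in image_sp K f).
Proof.
rewrite image_spE.
by apply: (iffP memv_imgP) => [] [u uK ->]; exists u; rewrite ?lfunE.
Qed.

Lemma graph_map_cross_scaled gamma a b s t s' t' (lam u v : L) :
  graph_map gamma a s t (lam * u) * graph_map gamma b s' t' v
    - graph_map gamma a s t u * graph_map gamma b s' t' (lam * v) =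
  (lam ^+ q - lam) * (s * u ^+ q * v * gamma ^+ a - u * s' * v ^+ q * gamma ^+ b
    + (s * u ^+ q * (s' * v ^+ q + t' * v) - s' * v ^+ q * (s * u ^+ q + t * u))
      * gamma ^+ (a + b)).
Proof. by rewrite /graph_map !exprMn exprD; ring. Qed.

End GraphMap.

Section GraphSpaces.
Variables (F : finFieldType) (L : fieldExtType F) (K : {subfield L}) (r : nat) (gamma : L).
Hypothesis minPoly_size : size (minPoly K gamma) = r.+1.
Local Notation q := #|F|.
Local Notation X := (graph_map gamma).
Local Notation G a s t := (image_sp K (X a s t)).

Lemma dim_graph_sp a s t : (1 <= a)%N -> (a + a < r)%N -> s \in K -> t \in K ->
  \dim (G a s t) = \dim K.
Proof.
move=> a1 ar sK tK; rewrite image_spE limg_dim_eq //.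
apply/eqP; rewrite -subv0; apply/subvP => u; rewrite memv_cap memv_ker lfunE /=.
case/andP => uK /eqP Xu0; rewrite memv0.
have := @gamma_comb_eq0 _ _ K r gamma minPoly_size u (s * u ^+ q + t * u) 0 0 a a uK.
rewrite rpredD ?rpredM ?rpredX ?rpred0 // !mul0r !addr0.
by move/(_ isT isT isT a1 a1 ar Xu0) => [->].
Qed.

Lemma graph_sp0 a : G a 0 0 = K.
Proof.
apply/vspaceP => x; apply/image_sp_linearP/idP => [[u uK ->] | xK]; last exists x => //;
  by rewrite /= /graph_map !mul0r add0r mul0r addr0.
Qed.

Lemma graph_cross_proportional a b s t s' t' (u1 u2 v1 v2 : L) :
  (1 <= a)%N -> (1 <= b)%N -> (a + b < r)%N ->
  s \in K -> t \in K -> s' \in K -> t' \in K ->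
  u1 \in K -> u2 \in K -> v1 \in K -> v2 \in K ->
  X a s t u1 * X b s' t' v2 = X a s t u2 * X b s' t' v1 -> u1 * v2 = u2 * v1.
Proof.
move=> a1 b1 abr sK tK s'K t'K u1K u2K v1K v2K /eqP; rewrite -subr_eq0 => /eqP E.
pose S u := s * u ^+ q + t * u; pose T v := s' * v ^+ q + t' * v.
have SK u : u \in K -> S u \in K by move=> uK; rewrite rpredD ?rpredM ?rpredX.
have TK v : v \in K -> T v \in K by move=> vK; rewrite rpredD ?rpredM ?rpredX.
have AK : u1 * v2 - u2 * v1 \in K by rewrite rpredB ?rpredM.
have BK : S u1 * v2 - S u2 * v1 \in K by rewrite rpredB ?rpredM ?SK.
have CK : u1 * T v2 - u2 * T v1 \in K by rewrite rpredB ?rpredM ?TK.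
have DK : S u1 * T v2 - S u2 * T v1 \in K by rewrite rpredB ?rpredM ?SK ?TK.
have [|/eqP + _ _] := gamma_comb_eq0 minPoly_size AK BK CK DK a1 b1 abr.
  by rewrite -E /S /T /graph_map exprD; ring.
by rewrite subr_eq0 => /eqP.
Qed.

Lemma graph_cross_coeffs a b s t s' t' (lam u v : L) :
  (1 <= a)%N -> (1 <= b)%N -> (a + b < r)%N ->
  s \in K -> t \in K -> s' \in K -> t' \in K ->
  u \in K -> v \in K -> lam ^+ q != lam ->
  X a s t (lam * u) * X b s' t' v = X a s t u * X b s' t' (lam * v) ->
  s * u ^+ q * (s' * v ^+ q + t' * v) = s' * v ^+ q * (s * u ^+ q + t * u) /\
  if a == b then s * u ^+ q * v = s' * v ^+ q * u
  else s * u ^+ q * v = 0 /\ s' * v ^+ q * u = 0.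
Proof.
move=> a1 b1 abr sK tK s'K t'K uK vK Dn /eqP.
rewrite -subr_eq0 graph_map_cross_scaled mulf_eq0 subr_eq0 (negbTE Dn) /= => /eqP E.
have BK : s * u ^+ q * v \in K by rewrite !rpredM ?rpredX.
have CK : - (u * s' * v ^+ q) \in K by rewrite rpredN !rpredM ?rpredX.
have DK : s * u ^+ q * (s' * v ^+ q + t' * v) - s' * v ^+ q * (s * u ^+ q + t * u) \in K.
  by rewrite ?(rpredB, rpredD, rpredM, rpredX).
have [|_ /eqP + Elow] := gamma_comb_eq0 minPoly_size (rpred0 K) BK CK DK a1 b1 abr.
  by rewrite add0r -E mulNr; ring.
rewrite subr_eq0 => /eqP Ehigh; split=> //.
case: eqP Elow => _; first by move/eqP; rewrite addr_eq0 opprK => /eqP ->; ring.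
by case=> -> /eqP; rewrite oppr_eq0 => /eqP <-; split=> //; ring.
Qed.

Lemma graph_cross_params a b s t s' t' (u v : L) :
  (s = 0 -> t = 0) -> (s' = 0 -> t' = 0) -> u != 0 -> v != 0 ->
  s * u ^+ q * (s' * v ^+ q + t' * v) = s' * v ^+ q * (s * u ^+ q + t * u) ->
  (if a == b then s * u ^+ q * v = s' * v ^+ q * u
   else s * u ^+ q * v = 0 /\ s' * v ^+ q * u = 0) ->
  [/\ (s == 0) = (s' == 0), s != 0 -> a = b /\ t = t',
      s' * (u / v) = s * (u / v) ^+ q & X a s t u = (u / v) * X b s' t' v].
Proof.
move=> st s't' un vn Ehigh; have uqn : u ^+ q != 0 by rewrite expf_neq0.
have vqn : v ^+ q != 0 by rewrite expf_neq0.
case: eqP => [<- {b} Elow | _ [/eqP s0 /eqP s'0]]; last first.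
  move: s0 s'0; rewrite !mulf_eq0 (negbTE uqn) (negbTE vqn) (negbTE un) (negbTE vn).
  rewrite !orbF => /eqP s0 /eqP s'0; rewrite s0 s'0 (st s0) (s't' s'0) !eqxx !mul0r.
  by split=> //; rewrite /graph_map !mul0r !add0r !mul0r !addr0 divfK.
have ss' : (s == 0) = (s' == 0).
  apply/eqP/eqP => [s0 | s'0]; move: Elow; rewrite ?s0 ?s'0 !mul0r.
    by move/esym/eqP; rewrite !mulf_eq0 (negbTE vqn) (negbTE un) !orbF => /eqP.
  by move/eqP; rewrite !mulf_eq0 (negbTE uqn) (negbTE vn) !orbF => /eqP.
have tt' : t = t'.
  have [s0 | sn] := eqVneq s 0.
    by rewrite (st s0) s't' //; apply/eqP; rewrite -ss' s0.
  apply: (mulIf (mulf_neq0 (mulf_neq0 sn uqn) vn)); apply/eqP; rewrite -subr_eq0.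
  have -> : t * (s * u ^+ q * v) - t' * (s * u ^+ q * v) =
      s' * v ^+ q * (s * u ^+ q + t * u) - s * u ^+ q * (s' * v ^+ q + t' * v)
      + t * (s * u ^+ q * v - s' * v ^+ q * u) by ring.
  by rewrite Ehigh Elow !subrr mulr0 addr0.
have sw : s' * v ^+ q * (u / v) = s * u ^+ q by rewrite mulrA -Elow mulfK.
split=> //; first by rewrite expr_div_n [RHS]mulrA -sw; field; rewrite vqn.
by rewrite /graph_map tt' -sw; field.
Qed.

Lemma graph_translates_meet a b s t s' t' (beta beta' z1 z2 : L) :
  (1 <= a)%N -> (1 <= b)%N -> (a + b < r)%N ->
  s \in K -> t \in K -> s' \in K -> t' \in K ->
  (s = 0 -> t = 0) -> (s' = 0 -> t' = 0) -> beta != 0 -> beta' != 0 ->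
  z1 \in (mulsp beta (G a s t) :&: mulsp beta' (G b s' t'))%VS ->
  z2 \in (mulsp beta (G a s t) :&: mulsp beta' (G b s' t'))%VS ->
  z2 != 0 -> z1 \notin <[z2]>%VS ->
  [/\ (s == 0) = (s' == 0), s != 0 -> a = b /\ t = t' &
      exists w, [/\ w \in K, w != 0, s' * w = s * w ^+ q & beta' = beta * w]].
Proof.
move=> a1 b1 abr sK tK s'K t'K st s't' bn bn'.
rewrite !memv_cap => /andP [/mulspP [_ /image_sp_linearP [u1 u1K ->] z1E]].
move=> /mulspP [_ /image_sp_linearP [v1 v1K ->] z1E'].
move=> /andP [/mulspP [_ /image_sp_linearP [u2 u2K ->] z2E]].
move=> /mulspP [_ /image_sp_linearP [v2 v2K ->] z2E'] z2n z1n.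
rewrite /= in z1E z1E' z2E z2E'.
have Yv2n : X b s' t' v2 != 0 by apply: contraNneq z2n => Y0; rewrite z2E' Y0 mul0r.
have u2n : u2 != 0 by apply: contraNneq z2n => u0; rewrite z2E u0 graph_map0 mul0r.
have v2n : v2 != 0 by apply: contraNneq Yv2n => ->; rewrite graph_map0.
have cross : X a s t u1 * X b s' t' v2 = X a s t u2 * X b s' t' v1.
  apply: (mulIf (mulf_neq0 bn bn')).
  by transitivity (z1 * z2); [rewrite z1E z2E' | rewrite z1E' z2E]; ring.
have prop := graph_cross_proportional a1 b1 abr sK tK s'K t'K u1K u2K v1K v2K cross.
pose lam := u1 / u2.
have u1E : u1 = lam * u2 by rewrite /lam divfK.
have v1E : v1 = lam * v2 by apply: (mulfI u2n); rewrite -prop /lam; field.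
have lamq : lam ^+ q != lam.
  apply: contra z1n => /eqP lamF.
  have /vlineP [c lamc] : lam \in 1%VS by rewrite mem1v_card lamF.
  have -> : z1 = c *: z2.
    by rewrite z1E z2E u1E -mulr_algl -lamc /graph_map exprMn lamF; ring.
  by rewrite memvZ ?memv_line.
rewrite u1E v1E in cross.
have [Ehigh Elow] := graph_cross_coeffs a1 b1 abr sK tK s'K t'K u2K v2K lamq cross.
have [ss' hab sw XE] := graph_cross_params st s't' u2n v2n Ehigh Elow.
split=> //; exists (u2 / v2); split=> //.
- by rewrite rpredM ?rpredV.
- by rewrite mulf_neq0 ?invr_eq0.
- by apply: (mulfI Yv2n); rewrite -z2E' z2E XE; ring.
Qed.

End GraphSpaces.

Section SeqCount.
Variables (A B : eqType).

Lemma count_mem_sumn (f : A -> B) (s : seq A) (t : seq B) : uniq t ->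
  count (fun x => f x \in t) s = sumn [seq count (fun x => f x == y) s | y <- t].
Proof.
elim: t => [|y t IH] /=; first by rewrite count_pred0.
case/andP => yt ut; rewrite -IH // -(count_predUI (fun x => f x == y) (fun x => f x \in t)).
have -> : count (predI (fun x => f x == y) (fun x => f x \in t)) s = 0%N.
  by apply/eqP; rewrite -leqn0 leqNgt -has_count; apply/hasPn => x _ /=; case: eqP => // ->.
by rewrite addn0; apply: eq_count => x /=; rewrite in_cons.
Qed.

Lemma sumn_map_const (T : Type) (t : seq T) (m : nat) : sumn [seq m | _ <- t] = (size t * m)%N.
Proof. by elim: t => //= y t ->; rewrite mulSn. Qed.

Lemma size_undup_map_fibres (f : A -> B) (s : seq A) (m : nat) :
  (forall x, x \in s -> count (fun y => f y == f x) s = m) ->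
  (size (undup (map f s)) * m = size s)%N.
Proof.
move=> fibre_m; rewrite -(count_predT s).
rewrite -(@eq_in_count _ (fun x => f x \in undup (map f s))); last first.
  by move=> x xs; rewrite mem_undup map_f.
rewrite count_mem_sumn ?undup_uniq // -sumn_map_const; congr sumn.
by apply/eq_in_map => y; rewrite mem_undup => /mapP [x xs ->]; rewrite fibre_m.
Qed.

Lemma size_undup_flatten_disjoint (I : eqType) (ps : seq I) (f : I -> seq B) :
  uniq ps ->
  (forall p p' x, p \in ps -> p' \in ps -> x \in f p -> x \in f p' -> p = p') ->
  size (undup (flatten (map f ps))) = sumn [seq size (undup (f p)) | p <- ps].
Proof.
elim: ps => [|p ps IH] //= /andP [pps ups] disj.
rewrite undup_cat size_cat IH //; last first.
  by move=> a b x ha hb; apply: disj; rewrite in_cons ?ha ?hb orbT.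
congr (_ + _)%N; congr size; apply/all_filterP/allP => x; rewrite mem_undup => xp.
apply/negP => /flattenP [s /mapP [p' p'ps ->] xp'].
have pp' : p = p' by apply: (disj p p' x); rewrite ?in_cons ?eqxx ?p'ps ?orbT.
by move: pps; rewrite pp' p'ps.
Qed.

End SeqCount.

Lemma uphalf_pred_gt0 r : (2 < r)%N -> (0 < (uphalf r).-1)%N.
Proof. by move: (odd_double_half r); rewrite uphalf_half -addnn; case: (odd r) => /=; lia. Qed.

Lemma uphalf_pred_double_lt r : (2 < r)%N -> ((uphalf r).-1 + (uphalf r).-1 < r)%N.
Proof. by move: (odd_double_half r); rewrite uphalf_half -addnn; case: (odd r) => /=; lia. Qed.

Section Code.
Variables (F : finFieldType) (L : fieldExtType F) (K : {subfield L})
  (k r : nat) (xi gamma : L) (rep : 'I_(#|F|.-1) -> L).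
Local Notation q := #|F|.
Hypotheses (k_ge2 : (2 <= k)%N) (r_gt2 : (2 < r)%N) (dimK : \dim K = k)
  (dimL : \dim {: L}%VS = (r * k)%N)
  (xi_prim : (q ^ k).-1.-primitive_root xi)
  (rep_unit : forall t, rep t \in K /\ rep t != 0)
  (rep_cosets : forall t s, t != s -> ~ exists m : nat, rep t = rep s * xi ^+ (q.-1 * m))
  (minPoly_size : size (minPoly K gamma) = r.+1).

Local Notation e := (uphalf r).-1.
Local Notation N := (q ^ (r * k)).-1.
Local Notation G a s t := (image_sp K (graph_map gamma a s t)).

Lemma subfield_unit_xi_pow w : w \in K -> w != 0 -> exists m, w = xi ^+ m.
Proof.
move=> wK wn; have qk_gt0 : (0 < q ^ k)%N by rewrite expn_gt0 card_gt0.
have : w ^+ (q ^ k).-1 = 1.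
  apply: (mulfI wn); rewrite mulr1 -exprS prednK //.
  by apply/eqP; rewrite -dimK -Fermat's_little_theorem.
by case/(prim_rootP xi_prim) => i ->; exists i.
Qed.

Lemma rep_twist_eq t t' w : w \in K -> w != 0 -> rep t' * w = rep t * w ^+ q ->
  t' = t /\ w \in 1%VS.
Proof.
move=> wK wn E; have [_ rn] := rep_unit t.
have E' : rep t' = rep t * w ^+ q.-1.
  by apply: (mulIf wn); rewrite E -mulrA -exprSr prednK ?card_gt0.
have tt' : t' = t.
  have [// | ne] := eqVneq t' t; exfalso; apply: (rep_cosets ne).
  by have [m wE] := subfield_unit_xi_pow wK wn; exists m; rewrite E' wE -exprM mulnC.
split=> //; subst t'.
by rewrite mem1v_card; apply/eqP; apply: (mulfI rn); rewrite -E.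
Qed.

Definition param := ((('I_(q.-1) * L) * nat) + ('I_(q.-1) * nat) + unit)%type.

Definition base_sp (p : param) : {vspace L} :=
  match p with
  | inl (inl (td, l)) => Usp K gamma (rep td.1) td.2 l
  | inl (inr (t, l)) => Vsp K gamma (rep t) l
  | inr _ => K
  end.

(* Any level would do for [inr tt], as [G a 0 0 = K] for every [a]. *)
Definition level (p : param) : nat :=
  match p with inl (inl (_, l)) | inl (inr (_, l)) => l | inr _ => 1%N end.

Definition coef_s (p : param) : L :=
  match p with
  | inl (inl (td, _)) => rep td.1 * td.2 | inl (inr (t, _)) => rep t | inr _ => 0
  end.

Definition coef_t (p : param) : L :=
  match p with inl (inl (td, _)) => td.2 | _ => 0 end.

Definition admissible (p : param) : bool :=
  match p with
  | inl (inl (td, l)) => [&& td.2 \in K, td.2 != 0, (1 <= l)%N & (l <= e)%N]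
  | inl (inr (_, l)) => (1 <= l)%N && (l <= e)%N
  | inr _ => true
  end.

Definition stabilizer (p : param) : {vspace L} := if p is inr _ then K else 1%VS.

Lemma base_spE p : base_sp p = G (level p) (coef_s p) (coef_t p).
Proof.
case: p => [[[[t d] l] | [t l]] | []] /=; last by rewrite graph_sp0.
  by apply: image_sp_ext => u; rewrite /graph_map; ring.
by apply: image_sp_ext => u; rewrite /graph_map; ring.
Qed.

Lemma admissible_coefs p : admissible p ->
  [/\ coef_s p \in K, coef_t p \in K, (1 <= level p)%N, (level p <= e)%N &
      coef_s p = 0 -> coef_t p = 0].
Proof.
case: p => [[[[t d] l] | [t l]] | []] /=; last by split; rewrite ?rpred0 ?(uphalf_pred_gt0 r_gt2).
  case/and4P => dK dn l1 le; have [rK rn] := rep_unit t.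
  by split; rewrite ?rpredM // => /eqP; rewrite mulf_eq0 (negbTE rn) (negbTE dn).
case/andP => l1 le; have [rK rn] := rep_unit t.
by split; rewrite ?rpred0 // => rt0; move: rn; rewrite rt0 eqxx.
Qed.

Lemma dim_base_sp p : admissible p -> \dim (base_sp p) = k.
Proof.
case/admissible_coefs => sK tK l1 le _; rewrite base_spE -dimK (dim_graph_sp minPoly_size) //.
exact: leq_ltn_trans (leq_add le le) (uphalf_pred_double_lt r_gt2).
Qed.

Lemma mulsp_stabilizer p w : w \in stabilizer p -> w != 0 -> mulsp w (base_sp p) = base_sp p.
Proof. by case: p => [p | []] /=; [apply: mulsp_scalar | apply: mulsp_subfield]. Qed.

Lemma coef_s_eq0 p : admissible p -> (coef_s p == 0) = (p == inr tt).
Proof.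
case: p => [[[[t d] l] | [t l]] | []] /= vp; last by rewrite !eqxx.
  have [_ rn] := rep_unit t; case/and4P: vp => _ dn _ _.
  by rewrite mulf_eq0 (negbTE rn) (negbTE dn).
by have [_ /negbTE ->] := rep_unit t.
Qed.

Lemma param_twist_eq p p' w : admissible p -> admissible p' -> w \in K -> w != 0 ->
  (coef_s p == 0) = (coef_s p' == 0) ->
  (coef_s p != 0 -> level p = level p' /\ coef_t p = coef_t p') ->
  coef_s p' * w = coef_s p * w ^+ q -> p = p' /\ w \in stabilizer p.
Proof.
move=> vp vp' wK wn; rewrite (coef_s_eq0 vp) (coef_s_eq0 vp').
case: p p' vp vp' => [[[[t d] l] | [t l]] | []] [[[[t' d'] l'] | [t' l']] | []] //=.
- case/and4P=> _ dn _ _ _ _ /(_ isT) [<- <-] sw.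
  suff [<- ->] : t' = t /\ w \in 1%VS by [].
  by apply: rep_twist_eq => //; apply: (mulIf dn); rewrite mulrAC sw mulrAC.
- by case/and4P=> _ dn _ _ _ _ /(_ isT) [_ d0]; rewrite d0 eqxx in dn.
- by move=> _ /and4P [_ dn _ _] _ /(_ isT) [_ d0]; rewrite -d0 eqxx in dn.
- by move=> _ _ _ /(_ isT) [<- _] /rep_twist_eq [//|//| <- ->].
Qed.

Lemma base_meet p p' (b b' : L) : admissible p -> admissible p' -> b != 0 -> b' != 0 ->
  (2 <= \dim (mulsp b (base_sp p) :&: mulsp b' (base_sp p')))%N ->
  p = p' /\ exists2 w, (w \in stabilizer p) && (w != 0) & b' = b * w.
Proof.
move=> vp vp' bn bn' /dimv_ge2_noncollinear [z1 [z2 [Z1 Z2 z2n z1n]]].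
rewrite !base_spE in Z1 Z2.
have [sK tK l1 le st] := admissible_coefs vp.
have [sK' tK' l1' le' st'] := admissible_coefs vp'.
have ll' : (level p + level p' < r)%N.
  exact: leq_ltn_trans (leq_add le le') (uphalf_pred_double_lt r_gt2).
have [ss' eq_lt [w [wK wn sw ->]]] :=
  graph_translates_meet minPoly_size l1 l1' ll' sK tK sK' tK' st st' bn bn' Z1 Z2 z2n z1n.
have [-> wS] := param_twist_eq vp vp' wK wn ss' eq_lt sw.
by split=> //; exists w; rewrite ?wS.
Qed.

Lemma base_meet_eq p p' (b b' : L) : admissible p -> admissible p' -> b != 0 -> b' != 0 ->
  (2 <= \dim (mulsp b (base_sp p) :&: mulsp b' (base_sp p')))%N ->
  p = p' /\ mulsp b (base_sp p) = mulsp b' (base_sp p').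
Proof.
move=> vp vp' bn bn' /(base_meet vp vp' bn bn') [<- [w /andP [wS wn] ->]].
by rewrite -mulspM (mulsp_stabilizer wS wn).
Qed.

Definition U_params : seq (('I_(q.-1) * L) * nat) :=
  [seq (td, l) | td <- [seq (t, d) | t <- enum 'I_(q.-1), d <- nzelems K], l <- iota 1 e].

Definition V_params : seq ('I_(q.-1) * nat) :=
  [seq (t, l) | t <- enum 'I_(q.-1), l <- iota 1 e].

Definition params : seq param :=
  [seq inl (inl x) | x <- U_params] ++ [seq inl (inr x) | x <- V_params] ++ [:: inr tt].

Definition orbit_of (p : param) : seq {vspace L} := orbit_sp (base_sp p).

Local Notation code := (undup (flatten (map orbit_of params))).

Lemma codeE : code1 K gamma rep e ++ code2 K gamma rep e ++ code3 K =
  flatten (map orbit_of params).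
Proof.
rewrite /params !map_cat !flatten_cat -!map_comp /= cats0.
by congr (_ ++ (_ ++ _)); rewrite [in RHS]map_allpairs.
Qed.

Lemma mem_params_U t d l : d \in K -> d != 0 -> (1 <= l <= e)%N ->
  (inl (inl ((t, d), l)) : param) \in params.
Proof.
move=> dK dn le; rewrite mem_cat map_f //.
apply/allpairsP; exists ((t, d), l); split=> //; last by rewrite mem_iota add1n ltnS.
apply/allpairsP; exists (t, d); split=> //; first by rewrite mem_enum.
by rewrite mem_filter dK dn mem_elems.
Qed.

Lemma mem_params_V t l : (1 <= l <= e)%N -> (inl (inr (t, l)) : param) \in params.
Proof.
move=> le; rewrite !mem_cat map_f ?orbT //.
by apply/allpairsP; exists (t, l); rewrite mem_enum mem_iota add1n ltnS.
Qed.

Lemma mem_params_K : (inr tt : param) \in params.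
Proof. by rewrite !mem_cat mem_seq1 eqxx !orbT. Qed.

Lemma params_admissible p : p \in params -> admissible p.
Proof.
rewrite !mem_cat mem_seq1 => /or3P [/mapP [x xU ->] | /mapP [x xV ->] | /eqP -> //].
  case/allpairsP: xU => [[td l] /= [+ lI ->]] => /allpairsP [[t d] /= [_ dN ->]] /=.
  by move: dN lI; rewrite mem_filter mem_iota add1n ltnS => /andP [/andP [-> ->] _].
case/allpairsP: xV => [[t l] /= [_ lI ->]] /=.
by move: lI; rewrite mem_iota add1n ltnS.
Qed.

Lemma uniq_params : uniq params.
Proof.
have uU : uniq U_params.
  rewrite allpairs_uniq ?iota_uniq ?allpairs_uniq ?enum_uniq //; try by move=> [? ?] [? ?].
  exact: (filter_uniq _ (@enum_uniq (finvect_type L) (finvect_type L))).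
have uV : uniq V_params by rewrite allpairs_uniq ?iota_uniq ?enum_uniq // => [[? ?] [? ?]].
rewrite /params !cat_uniq /= orbF !map_inj_uniq ?uU ?uV //=; try by move=> ? ? [].
rewrite andbT; apply/andP; split; last by apply/mapP => [[y _]].
apply/hasPn => z; rewrite mem_cat mem_seq1 => /orP [/mapP [x _ ->] | /eqP ->].
  by apply/mapP => [[y _]].
by apply/mapP => [[y _]].
Qed.

Lemma codeP V : reflect (exists p b, [/\ p \in params, b != 0 & V = mulsp b (base_sp p)])
  (V \in code).
Proof.
apply: (iffP idP) => [| [p [b [pps bn ->]]]].
  rewrite mem_undup => /flattenP [s /mapP [p pps ->]] /mapP [b].
  by rewrite mem_filter => /andP [bn _] ->; exists p, b.
rewrite mem_undup; apply/flattenP; exists (orbit_of p); first exact: map_f.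
by apply: map_f; rewrite mem_filter bn mem_elems.
Qed.

Lemma code_cyclic : cyclic_code code.
Proof.
move=> V a /codeP [p [b [pps bn ->]]] an; apply/codeP.
by exists p, (a * b); rewrite mulspM mulf_neq0.
Qed.

Lemma code_const_dim : const_dim_code code k.
Proof.
by move=> V /codeP [p [b [pps bn ->]]]; rewrite dim_mulsp // dim_base_sp ?params_admissible.
Qed.

Lemma code_meet_le1 U V : U \in code -> V \in code -> U != V -> (\dim (U :&: V) <= 1)%N.
Proof.
move=> /codeP [p [b [pps bn ->]]] /codeP [p' [b' [pps' bn' ->]]].
apply: contraR; rewrite -ltnNge => /(base_meet_eq (params_admissible pps)).
by case/(_ (params_admissible pps') bn bn') => _ ->.
Qed.

Lemma orbit_fibre_size p x : admissible p -> x != 0 ->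
  count (fun y => mulsp y (base_sp p) == mulsp x (base_sp p)) [seq a <- elems L | a != 0] =
  (q ^ \dim (stabilizer p)).-1.
Proof.
move=> vp xn; rewrite count_filter count_elems -card_vspace_nz.
have mulx_inj : injective (fun w : finvect_type L => (x * w : finvect_type L)) by apply: mulfI.
rewrite -(card_image mulx_inj [pred w : finvect_type L | (w \in stabilizer p) && (w != 0)]).
apply: eq_card => y; rewrite !inE; apply/andP/imageP => [[/eqP E yn] | [w]].
  have : (2 <= \dim (mulsp x (base_sp p) :&: @mulsp F L y (base_sp p)))%N.
    by rewrite E capvv dim_mulsp // dim_base_sp.
  by case/(base_meet vp vp xn yn) => _ [w wS ->]; exists w.
rewrite inE => /andP [wS wn] ->; split; last by rewrite mulf_neq0.
by rewrite -mulspM (mulsp_stabilizer wS wn).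
Qed.

Lemma size_orbit p : admissible p ->
  size (undup (orbit_of p)) = (N %/ (q ^ \dim (stabilizer p)).-1)%N.
Proof.
move=> vp; have m_gt0 : (0 < (q ^ \dim (stabilizer p)).-1)%N.
  have dS : (0 < \dim (stabilizer p))%N.
    by case: p vp => [p | []] _ /=; rewrite ?dimv1 ?dimK // ltnW.
  by rewrite -subn1 subn_gt0 -{1}(expn0 q) ltn_exp2l ?finNzRing_gt1.
have -> : N = size [seq a <- elems L | a != 0].
  rewrite size_filter count_elems -dimL -card_vspace_nz.
  by apply: eq_card => y; rewrite !inE memvf.
rewrite -(@size_undup_map_fibres _ _ (fun a : L => mulsp a (base_sp p)) _
  (q ^ \dim (stabilizer p)).-1) ?mulnK //.
by move=> x; rewrite mem_filter => /andP [xn _]; apply: orbit_fibre_size.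
Qed.

Lemma orbits_disjoint p p' V : p \in params -> p' \in params ->
  V \in orbit_of p -> V \in orbit_of p' -> p = p'.
Proof.
move=> pps pps' /mapP [b]; rewrite mem_filter => /andP [bn _] ->.
move=> /mapP [b']; rewrite mem_filter => /andP [bn' _] E.
have vp := params_admissible pps; have vp' := params_admissible pps'.
have : (2 <= \dim (mulsp b (base_sp p) :&: mulsp b' (base_sp p')))%N.
  by rewrite -E capvv dim_mulsp // dim_base_sp.
by case/(base_meet_eq vp vp' bn bn').
Qed.

Lemma size_code : size code =
  (e * q ^ k * (q ^ (r * k) - 1) + (q ^ (r * k) - 1) %/ (q ^ k - 1))%N.
Proof.
rewrite size_undup_flatten_disjoint ?uniq_params //; last exact: orbits_disjoint.
have -> : [seq size (undup (orbit_of p)) | p <- params] =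
          [seq N %/ (q ^ \dim (stabilizer p)).-1 | p <- params]%N.
  by apply/eq_in_map => p /params_admissible /size_orbit.
rewrite /params !map_cat !sumn_cat -!map_comp /comp /= !sumn_map_const dimv1 expn1 dimK.
rewrite /U_params /V_params !size_allpairs size_iota size_enum_ord.
rewrite size_filter count_elems card_vspace_nz dimK !subn1 addn0 addnA; congr (_ + _)%N.
set M := (N %/ q.-1)%N; set Qk := (q ^ k).-1.
have NM : N = (q.-1 * M)%N by rewrite /M [RHS]mulnC divnK ?dvdn_pred_predX.
have QkS : (q ^ k = Qk.+1)%N by rewrite /Qk prednK // expn_gt0 card_gt0.
by rewrite NM QkS; ring.
Qed.

Lemma dist_of_meet p p' x : p \in params -> p' \in params -> p != p' -> x != 0 ->
  x \in base_sp p -> x \in base_sp p' ->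
  exists U V, [/\ U \in code, V \in code, U != V & sdist U V = (2 * k - 2)%N].
Proof.
move=> pps pps' pp' xn xp xp'.
have vp := params_admissible pps; have vp' := params_admissible pps'.
have mem_code p1 : p1 \in params -> base_sp p1 \in code.
  by move=> p1ps; apply/codeP; exists p1, 1; rewrite mulsp1 oner_neq0.
have UV : base_sp p != base_sp p'.
  apply: contra pp' => /eqP E; have := base_meet_eq vp vp' (oner_neq0 L) (oner_neq0 L).
  by rewrite !mulsp1 E capvv dim_base_sp // => /(_ k_ge2) [->].
exists (base_sp p), (base_sp p'); split; rewrite ?mem_code //.
have meet1 : \dim (base_sp p :&: base_sp p') = 1%N.
  apply/eqP; rewrite eqn_leq code_meet_le1 ?mem_code // lt0n dimv_eq0.
  by apply: contraNneq xn => E0; rewrite -memv0 -E0 memv_cap xp xp'.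
by rewrite /sdist meet1 !dim_base_sp // muln1 mul2n addnn.
Qed.

Lemma code_dist_attained :
  exists U V, [/\ U \in code, V \in code, U != V & sdist U V = (2 * k - 2)%N].
Proof.
have q1_gt0 : (0 < q.-1)%N by rewrite ltn_predRL finNzRing_gt1.
pose t0 : 'I_(q.-1) := Ordinal q1_gt0.
have [rK rn] := rep_unit t0; have l1 : (1 <= 1 <= e)%N by rewrite (uphalf_pred_gt0 r_gt2).
(* The point obtained from u = 1 is 1 + (rep t0 + 1) d gamma in U(t0, d, 1): it is
   1 + rep t0 gamma, also in V(t0, 1), for d = rep t0 / (rep t0 + 1), and it is
   1, also in F_{q^k}, for d = 1 when rep t0 = -1. *)
have [eta_m1 | eta_m1n] := eqVneq (rep t0 + 1) 0.
  apply: (@dist_of_meet (inl (inl ((t0, 1), 1%N))) (inr tt) 1).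
  - by rewrite mem_params_U ?mem1v ?oner_neq0.
  - exact: mem_params_K.
  - by [].
  - exact: oner_neq0.
  - rewrite base_spE; apply/image_sp_linearP; exists 1; rewrite ?mem1v //=.
    by rewrite /graph_map !expr1n !mulr1 eta_m1 mul0r addr0.
  - exact: mem1v.
pose d := rep t0 / (rep t0 + 1).
have dK : d \in K by rewrite rpredM ?rpredV ?rpredD ?mem1v.
have dn : d != 0 by rewrite mulf_neq0 ?invr_eq0.
apply: (@dist_of_meet (inl (inl ((t0, d), 1%N))) (inl (inr (t0, 1%N))) (1 + rep t0 * gamma)).
- exact: mem_params_U.
- exact: mem_params_V.
- by [].
- apply/eqP => E.
  have := @gamma_comb_eq0 _ _ K r gamma minPoly_size 1 (rep t0) 0 0 1 1 (mem1v K) rK.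
  case/(_ (rpred0 K) (rpred0 K) isT isT); last by move/eqP; rewrite oner_eq0.
    exact: r_gt2.
  by rewrite !mul0r !addr0 expr1.
- rewrite base_spE; apply/image_sp_linearP; exists 1; rewrite ?mem1v //=.
  by rewrite /graph_map !expr1n !mulr1 expr1 /d; field.
- rewrite base_spE; apply/image_sp_linearP; exists 1; rewrite ?mem1v //=.
  by rewrite /graph_map !expr1n !mulr1 addr0 expr1.
Qed.

Lemma code_min_dist : min_dist code (2 * k - 2)%N.
Proof.
split; last exact: code_dist_attained.
move=> U V Uc Vc UV; rewrite /sdist (code_const_dim Uc) (code_const_dim Vc) addnn -mul2n.
by rewrite leq_sub2l // -[X in (_ <= X)%N]muln1 leq_mul2l code_meet_le1 ?orbT.
Qed.

End Code.

Theorem theorem3p4 (F : finFieldType) (L : fieldExtType F) (K : {subfield L})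
    (k r : nat) (xi gamma : L) (rep : 'I_(#|F|.-1) -> L) :
  (2 <= k)%N -> (2 < r)%N ->
  \dim K = k -> \dim {: L}%VS = (r * k)%N ->
  xi \in K -> (#|F| ^ k).-1.-primitive_root xi ->
  (forall t, rep t \in K /\ rep t != 0) ->
  (forall t s, t != s -> ~ exists m : nat, rep t = rep s * xi ^+ (#|F|.-1 * m)) ->
  size (minPoly K gamma) = r.+1 ->
  let q := #|F| in
  let n := (r * k)%N in
  let e := (uphalf r).-1 in
  let C := undup (code1 K gamma rep e ++ code2 K gamma rep e ++ code3 K) in
  [/\ cyclic_code C, const_dim_code C k,
      size C = (e * q ^ k * (q ^ n - 1) + (q ^ n - 1) %/ (q ^ k - 1))%N
    & min_dist C (2 * k - 2)%N].
Proof.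
move=> k_ge2 r_gt2 dimK dimL _ xi_prim rep_unit rep_cosets minPoly_size q n e C.
rewrite /C /e codeE; split.
- exact: code_cyclic.
- exact: (code_const_dim r_gt2 dimK rep_unit minPoly_size).
- exact: (size_code k_ge2 r_gt2 dimK dimL xi_prim rep_unit rep_cosets minPoly_size).
- exact: (code_min_dist k_ge2 r_gt2 dimK xi_prim rep_unit rep_cosets minPoly_size).
Qed.
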